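(* Let $M_\varphi$ be a hyperbolic once-punctured torus bundle with fibre $S$. For any irreducible representation $\rho\colon\pi_1(S)\to\mathrm{SL}(2,\mathbb{C})$ whose character $\chi_\rho$ lies in $X_\varphi(S)$, there exists $T\in\mathrm{SL}(2,\mathbb{C})$ such that $T^{-1}\rho(\gamma)T=\rho(\varphi(\gamma))$ for all $\gamma\in\pi_1(S)$. Moreover, $T$ is unique up to sign, and at least one of $\operatorname{tr}T$, $\operatorname{tr}(\rho(a)T)$, $\operatorname{tr}(\rho(b)T)$, $\operatorname{tr}(\rho(ab)T)$ is nonzero.
   Context: $\pi_1(S)$ is free on $a,b$ and $\varphi$ denotes the automorphism of $\pi_1(S)$ induced by the monodromy. $X(S)\cong\mathbb{C}^3$ is the $\mathrm{SL}(2,\mathbb{C})$-character variety of $\pi_1(S)$ with coordinates $(\operatorname{tr}\rho(a),\operatorname{tr}\rho(b),\operatorname{tr}\rho(ab))$, and $X_\varphi(S)=\{\chi\in X(S):\chi=\chi\circ\varphi\}$. *)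

From HB Require Import structures.
From mathcomp Require Import all_boot all_order all_algebra.
From mathcomp Require Import reals complex.
Set Implicit Arguments. Unset Strict Implicit. Unset Printing Implicit Defensive.
Import Order.TTheory GRing.Theory Num.Theory.
Local Open Scope ring_scope.

(* Words in the free group F(a,b) = pi_1(S).
   A letter is (g, e): g = false means a, g = true means b;
   e = false means exponent +1, e = true means exponent -1. *)
Definition letter := (bool * bool)%type.
Definition word := seq letter.
Definition gen_a : word := [:: (false, false)].
Definition gen_b : word := [:: (true, false)].
Definition inv_letter (x : letter) : letter := (x.1, ~~ x.2).
Definition inv_word (w : word) : word := rev (map inv_letter w).

(* free reduction: words represent the same element of F2 iff they have the
   same reduced form *)
Definition reduce_cons (x : letter) (s : word) : word :=
  if s is y :: s' then (if y == inv_letter x then s' else x :: s) else [:: x].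
Definition reduce (w : word) : word := foldr reduce_cons [::] w.

(* an endomorphism of F2 is given by the images of a and b *)
Definition endo := (word * word)%type.
Definition subst_letter (phi : endo) (x : letter) : word :=
  let w := if x.1 then phi.2 else phi.1 in if x.2 then inv_word w else w.
Definition apply_endo (phi : endo) (w : word) : word :=
  flatten (map (subst_letter phi) w).

Definition is_aut (phi : endo) : Prop :=
  exists psi : endo,
    [/\ reduce (apply_endo phi (apply_endo psi gen_a)) = gen_a,
        reduce (apply_endo phi (apply_endo psi gen_b)) = gen_b,
        reduce (apply_endo psi (apply_endo phi gen_a)) = gen_a &
        reduce (apply_endo psi (apply_endo phi gen_b)) = gen_b].

Definition expsum (g : bool) (w : word) : int :=
  \sum_(x <- w | x.1 == g) (if x.2 then (-1)%R else 1%R).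

(* the induced action of phi on H_1(S;Z) = Z^2 (columns = images of a, b) *)
Definition hom_trace (phi : endo) : int :=
  expsum false phi.1 + expsum true phi.2.
Definition hom_det (phi : endo) : int :=
  expsum false phi.1 * expsum true phi.2 - expsum false phi.2 * expsum true phi.1.

(* phi is the monodromy of a hyperbolic (orientable) once-punctured torus
   bundle: an automorphism of F2 whose action on homology is in SL(2,Z)
   and is Anosov, i.e. |trace| > 2 *)
Definition hyperbolic_monodromy (phi : endo) : Prop :=
  [/\ is_aut phi, hom_det phi = 1 & 2 < `|hom_trace phi|].

Section Rep.
Variable C : comUnitRingType.
Definition in_SL2 (M : 'M[C]_2) : Prop := \det M = 1.
(* a representation rho of F2 is determined by (rho a, rho b) *)
Definition rep := ('M[C]_2 * 'M[C]_2)%type.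
Definition eval_letter (rho : rep) (x : letter) : 'M[C]_2 :=
  let M := if x.1 then rho.2 else rho.1 in if x.2 then invmx M else M.
Definition eval_word (rho : rep) (w : word) : 'M[C]_2 :=
  \prod_(x <- w) eval_letter rho x.
Definition is_SL2_rep (rho : rep) : Prop := in_SL2 rho.1 /\ in_SL2 rho.2.
End Rep.

(* irreducible: no proper nonzero invariant subspace of C^2, i.e. no line
   (spanned by a nonzero row vector v, matrices acting on the right) invariant
   under both rho(a) and rho(b) *)
Definition irreducible_rep (C : fieldType) (rho : rep C) : Prop :=
  ~ exists v : 'rV[C]_2, v != 0 /\
      (exists la : C, v *m rho.1 = la *: v) /\ (exists lb : C, v *m rho.2 = lb *: v).

(* chi_rho lies in X_phi(S): chi_rho = chi_rho o phi as functions on pi_1(S) *)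
Definition char_fixed (C : comUnitRingType) (phi : endo) (rho : rep C) : Prop :=
  forall w : word, \tr (eval_word rho w) = \tr (eval_word rho (apply_endo phi w)).

Definition intertwines (C : comUnitRingType) (phi : endo) (rho : rep C)
  (T : 'M[C]_2) : Prop :=
  forall w : word, invmx T *m eval_word rho w *m T = eval_word rho (apply_endo phi w).

From HB Require Import structures.
From mathcomp Require Import all_boot all_order all_algebra.
From mathcomp Require Import reals complex.
From mathcomp Require Import ring.
Import Order.TTheory GRing.Theory Num.Theory.
Set Implicit Arguments. Unset Strict Implicit. Unset Printing Implicit Defensive.
Local Open Scope ring_scope.

(* Let x, y, z be the traces of A, B, AB for an irreducible pair (A, B) in
   SL(2), and let u be a (row) eigenvector of A for the eigenvalue l.  In the
   basis (u, uB) the pair becomes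
     A0 = [[l, 0], [z - (x - l) y, x - l]],   B0 = [[0, 1], [-1, y]],
   by Cayley-Hamilton; irreducibility makes (u, uB) a basis.
   As rho and rho o phi have the same x, y, z they share this normal form,
   which yields T.  Schur's lemma, in the form "a nonzero matrix whose left
   kernel is stable under an irreducible pair is invertible", shows that T is
   invertible and that two such T differ by a scalar, hence by a sign since
   det T = 1.  Finally, in the normal form tr Q, tr (A0 Q), tr (B0 Q) and
   tr (A0 B0 Q) determine Q because det (A0 B0 - B0 A0) != 0, which is again a
   consequence of irreducibility. *)

Lemma det1_unitmx (R : comUnitRingType) n (M : 'M[R]_n) : \det M = 1 -> M \in unitmx.
Proof. by rewrite unitmxE => ->; rewrite unitr1. Qed.

Lemma mulmx_unit_eq0 (R : comUnitRingType) n (P M : 'M[R]_n) :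
  P \in unitmx -> (P *m M == 0) = (M == 0).
Proof.
move=> Pu; apply/eqP/eqP => [PM0|->]; last exact: mulmx0.
by rewrite -(mulKmx Pu M) PM0 mulmx0.
Qed.

Lemma invmxM (R : comUnitRingType) n (A B : 'M[R]_n) : A \in unitmx -> B \in unitmx ->
  invmx (A *m B) = invmx B *m invmx A.
Proof.
move=> Au Bu; have ABu : A *m B \in unitmx by rewrite unitmx_mul Au.
by rewrite -[RHS]mul1mx -(mulVmx ABu) -!mulmxA (mulmxA B) mulmxV // mul1mx mulmxV // mulmx1.
Qed.

Lemma invmx_conj (R : comUnitRingType) n (T M : 'M[R]_n) : T \in unitmx -> M \in unitmx ->
  invmx (invmx T *m M *m T) = invmx T *m invmx M *m T.
Proof.
move=> Tu Mu; have T'Mu : invmx T *m M \in unitmx by rewrite unitmx_mul unitmx_inv Tu.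
by rewrite !invmxM ?unitmx_inv // invmxK mulmxA.
Qed.

Lemma conj_mxP (R : comUnitRingType) n (T M M' : 'M[R]_n) : T \in unitmx ->
  invmx T *m M *m T = M' <-> M *m T = T *m M'.
Proof.
move=> Tu; split=> [<-|MT]; first by rewrite !mulmxA mulmxV ?mul1mx.
by rewrite -mulmxA MT mulKmx.
Qed.

Lemma intertwine_mulmx (R : comRingType) n (P A B A0 B0 : 'M[R]_n) :
  P *m A = A0 *m P -> P *m B = B0 *m P -> P *m (A *m B) = A0 *m B0 *m P.
Proof. by move=> PA PB; rewrite mulmxA PA -!mulmxA PB. Qed.

Lemma intertwine_same_form (R : comUnitRingType) n (P P' A A' A0 : 'M[R]_n) :
  P \in unitmx -> P *m A = A0 *m P -> P' *m A' = A0 *m P' ->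
  A *m (invmx P *m P') = (invmx P *m P') *m A'.
Proof.
move=> Pu PA P'A'; rewrite -mulmxA P'A' !mulmxA; congr (_ *m _).
by rewrite -[A](mulKmx Pu) PA !mulmxA mulmxK.
Qed.

Lemma rank_le1_collinear (F : fieldType) m n (M : 'M[F]_(m, n)) (v w : 'rV[F]_n) :
  (\rank M <= 1)%N -> v != 0 -> (v <= M)%MS -> (w <= M)%MS -> exists c, w = c *: v.
Proof.
move=> rkM v0 vM wM; apply/sub_rVP; apply: submx_trans wM _.
by rewrite -(mxrank_leqif_sup vM) eqn_leq mxrankS // rank_rV v0.
Qed.

Section Coordinates.
Variable R : comRingType.

Definition mx2 (a b c d : R) : 'M[R]_2 :=
  \matrix_(i, j) if i == 0 then (if j == 0 then a else b) else (if j == 0 then c else d).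

Ltac mx2_entrywise :=
  apply/matrixP=> -[[|[|//]] ?] [[|[|//]] ?];
  rewrite !mxE ?big_ord_recl ?big_ord0 ?mxE /= ?addr0.

Lemma mx2_eta (A : 'M[R]_2) : A = mx2 (A 0 0) (A 0 1) (A 1 0) (A 1 1).
Proof. by mx2_entrywise; congr (A _ _); apply: val_inj. Qed.

Lemma mx2_mul a b c d a' b' c' d' :
  mx2 a b c d *m mx2 a' b' c' d' =
  mx2 (a * a' + b * c') (a * b' + b * d') (c * a' + d * c') (c * b' + d * d').
Proof. by mx2_entrywise. Qed.

Lemma mx2_add a b c d a' b' c' d' :
  mx2 a b c d + mx2 a' b' c' d' = mx2 (a + a') (b + b') (c + c') (d + d').
Proof. by mx2_entrywise. Qed.

Lemma mx2_opp a b c d : - mx2 a b c d = mx2 (- a) (- b) (- c) (- d).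
Proof. by mx2_entrywise. Qed.

Lemma mx2_scale k a b c d : k *: mx2 a b c d = mx2 (k * a) (k * b) (k * c) (k * d).
Proof. by mx2_entrywise. Qed.

Lemma mx2_scalar k : k%:M = mx2 k 0 0 k.
Proof. by mx2_entrywise. Qed.

Lemma mx2_tr a b c d : \tr (mx2 a b c d) = a + d.
Proof. by rewrite /mxtrace !big_ord_recl big_ord0 !mxE /= addr0. Qed.

Lemma mx2_det a b c d : \det (mx2 a b c d) = a * d - b * c.
Proof.
rewrite (expand_det_row _ 0) !big_ord_recl big_ord0 /cofactor !det_mx11 !mxE /=.
by rewrite /bump /= !expr0 !expr1 !mul1r addr0 mulN1r mulrN.
Qed.

Definition mx2E := (mx2_mul, mx2_add, mx2_opp, mx2_scale, mx2_scalar, mx2_tr, mx2_det).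

Lemma mx2_anticomm (A B : 'M[R]_2) :
  A *m B + B *m A = \tr A *: B + \tr B *: A + (\tr (A *m B) - \tr A * \tr B)%:M.
Proof. by rewrite [A]mx2_eta [B]mx2_eta !mx2E; congr mx2; ring. Qed.

Lemma mx2_cayley_hamilton (A : 'M[R]_2) : A *m A = \tr A *: A - (\det A)%:M.
Proof. by rewrite [A]mx2_eta !mx2E; congr mx2; ring. Qed.

Lemma mx2_det_sub_scalar (A : 'M[R]_2) l :
  \det (A - l%:M) = l ^+ 2 - \tr A * l + \det A.
Proof. by rewrite [A]mx2_eta !mx2E; ring. Qed.

Lemma mx2_commutator_anticomm (A B : 'M[R]_2) :
  A *m (A *m B - B *m A) + (A *m B - B *m A) *m A = \tr A *: (A *m B - B *m A).
Proof. by rewrite [A]mx2_eta [B]mx2_eta !mx2E; congr mx2; ring. Qed.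

End Coordinates.

Lemma cramer2_eq0 (F : fieldType) (a b c d x y : F) : a * d - b * c != 0 ->
  a * x + b * y = 0 -> c * x + d * y = 0 -> x = 0 /\ y = 0.
Proof.
move=> det0 e1 e2.
have dx : (a * d - b * c) * x = d * (a * x + b * y) - b * (c * x + d * y) by ring.
have dy : (a * d - b * c) * y = a * (c * x + d * y) - c * (a * x + b * y) by ring.
rewrite e1 e2 !mulr0 subr0 in dx dy.
by move/eqP: dx; move/eqP: dy; rewrite !mulf_eq0 (negbTE det0) => /eqP-> /eqP->.
Qed.

Lemma lower_companion_trace_eq0 (F : fieldType) (l a m y : F) (Q : 'M[F]_2) :
  let A0 := mx2 l 0 a m in let B0 := mx2 0 1 (-1) y in
  \det (A0 *m B0 - B0 *m A0) != 0 ->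
  \tr Q = 0 -> \tr (A0 *m Q) = 0 -> \tr (B0 *m Q) = 0 -> \tr (A0 *m B0 *m Q) = 0 ->
  Q = 0.
Proof.
rewrite [Q]mx2_eta; move: (Q 0 0) (Q 0 1) (Q 1 0) (Q 1 1) => q1 q2 q3 q4 A0 B0.
rewrite !mx2E => det0 E1 E2 E3 E4.
have q1E : q1 = - q4 by apply/eqP; rewrite -addr_eq0 E1.
have q3E : q3 = q2 - y * q4 by apply/eqP; rewrite -subr_eq0 -E3; apply/eqP; ring.
have [q2_0 q4_0] : q2 = 0 /\ q4 = 0.
  apply: (@cramer2_eq0 _ (l - m) (a - (l - m) * y) a (m - l)).
  - by apply: contraNneq det0 => det0; apply/eqP; rewrite -[RHS]det0; ring.
  - by rewrite -[RHS]E4 q3E; ring.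
  - by rewrite -[RHS]E2 q1E; ring.
by rewrite q1E q3E q2_0 q4_0 oppr0 mulr0 subr0 -mx2_scalar raddf0.
Qed.

Section Irreducible.
Variable F : fieldType.
Implicit Types (A B M N P S T : 'M[F]_2) (u v w : 'rV[F]_2).

Lemma kernel_line N v w : N != 0 -> v != 0 -> v *m N = 0 -> w *m N = 0 ->
  exists c, w = c *: v.
Proof.
move=> N0 v0 /sub_kermxP vN /sub_kermxP wN; apply: rank_le1_collinear v0 vN wN.
by rewrite mxrank_ker leq_subLR addn1 ltnS lt0n mxrank_eq0.
Qed.

Lemma irr_common_eigenvector_eq0 A B v a b : irreducible_rep (A, B) ->
  v *m A = a *: v -> v *m B = b *: v -> v = 0.
Proof.
move=> irr vA vB; apply/eqP/negPn/negP => v0.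
by apply: irr; exists v; split=> //; split; [exists a | exists b].
Qed.

Lemma irr_stable_kernel_unit A B N : irreducible_rep (A, B) -> N != 0 ->
  (forall v, v *m N = 0 -> v *m A *m N = 0 /\ v *m B *m N = 0) ->
  N \in unitmx.
Proof.
move=> irr N0 stable; rewrite unitmxE unitfE; apply/negP => /det0P[v v0 vN].
have [vAN vBN] := stable v vN.
have [a vA] := kernel_line N0 v0 vN vAN; have [b vB] := kernel_line N0 v0 vN vBN.
by move: v0; rewrite (irr_common_eigenvector_eq0 irr vA vB) eqxx.
Qed.

Lemma irr_intertwiner_unit A B (A' B' : 'M[F]_2) T : irreducible_rep (A, B) ->
  T != 0 -> A *m T = T *m A' -> B *m T = T *m B' -> T \in unitmx.
Proof.
move=> irr T0 AT BT; apply: irr_stable_kernel_unit irr T0 _ => v vT.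
by rewrite -!mulmxA AT BT !mulmxA vT !mul0mx.
Qed.

Lemma irr_conj A B (A0 B0 : 'M[F]_2) P : P \in unitmx ->
  P *m A = A0 *m P -> P *m B = B0 *m P ->
  irreducible_rep (A, B) -> irreducible_rep (A0, B0).
Proof.
move=> Pu PA PB irr [v [v0 [[a vA0] [b vB0]]]].
suff vP0 : v *m P = 0 by move: v0; rewrite -(mulmxK Pu v) vP0 mul0mx eqxx.
apply: (irr_common_eigenvector_eq0 (a := a) (b := b) irr).
  by rewrite -mulmxA PA mulmxA vA0 scalemxAl.
by rewrite -mulmxA PB mulmxA vB0 scalemxAl.
Qed.

Lemma eigenvector_same_tr_det A (A' : 'M[F]_2) v l :
  \tr A = \tr A' -> \det A = \det A' -> v *m A = l *: v -> v != 0 ->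
  exists2 v' : 'rV[F]_2, v' *m A' = l *: v' & v' != 0.
Proof.
have sub_scalarE M u : u *m (M - l%:M) = 0 <-> u *m M = l *: u.
  by rewrite mulmxBr mul_mx_scalar; split=> [/eqP|->]; rewrite ?subrr // subr_eq0 => /eqP.
move=> trAA' detAA' vA v0.
have /det0P[v' v'0 /sub_scalarE v'A'] : \det (A' - l%:M) == 0.
  rewrite mx2_det_sub_scalar -trAA' -detAA' -mx2_det_sub_scalar.
  by apply/det0P; exists v; rewrite // sub_scalarE.
by exists v'.
Qed.

Definition krylov2 u B : 'M[F]_2 := \matrix_(i < 2) if i == 0 then u else u *m B.

Lemma mulmx_krylov2 u B M :
  M *m krylov2 u B = \matrix_(i < 2) (M i 0 *: u + M i 1 *: (u *m B)).
Proof.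
apply/row_matrixP => i; rewrite row_mul mulmx_sum_row rowK !big_ord_recl big_ord0 /=.
by rewrite !rowK !mxE addr0; congr (M i _ *: _ + M i _ *: _); apply: val_inj.
Qed.

Lemma krylov2_normal_form A B u l : \det B = 1 -> u *m A = l *: u ->
  krylov2 u B *m A =
    mx2 l 0 (\tr (A *m B) - (\tr A - l) * \tr B) (\tr A - l) *m krylov2 u B /\
  krylov2 u B *m B = mx2 0 1 (-1) (\tr B) *m krylov2 u B.
Proof.
move=> detB uA.
have uBA : u *m B *m A =
    (\tr (A *m B) - (\tr A - l) * \tr B) *: u + (\tr A - l) *: (u *m B).
  rewrite -mulmxA -[B *m A](addKr (A *m B)) mx2_anticomm !mulmxDr mulmxN mulmxA uA.
  rewrite -!scalemxAr mul_mx_scalar -scalemxAl uA scalerBl; move: (u *m B) => w.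
  by apply/rowP => j; rewrite !mxE; ring.
have uBB : u *m B *m B = -1 *: u + \tr B *: (u *m B).
  rewrite -mulmxA mx2_cayley_hamilton detB mulmxBr mul_mx_scalar -scalemxAr.
  by rewrite scaleN1r scale1r addrC.
split; apply/row_matrixP => -[[|[|//]] ?]; rewrite mulmx_krylov2 rowK row_mul rowK !mxE /=;
  by rewrite ?uBA ?uBB // scale0r ?addr0 ?add0r ?scale1r.
Qed.

Lemma krylov2_neq0 u B : u != 0 -> krylov2 u B != 0.
Proof. by apply: contraNneq => /(congr1 (row 0)); rewrite rowK row0 /= => ->. Qed.

Lemma krylov2_unit A B u l : irreducible_rep (A, B) -> u != 0 -> u *m A = l *: u ->
  krylov2 u B \in unitmx.
Proof.
move=> irr u0 uA; rewrite -row_full_unit /row_full; apply/negPn/negP => rk.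
have rk1 : (\rank (krylov2 u B) <= 1)%N.
  by move: rk (rank_leq_row (krylov2 u B)); rewrite leq_eqVlt ltnS => /negbTE->.
have := row_sub 0 (krylov2 u B); have := row_sub 1 (krylov2 u B); rewrite !rowK /=.
move=> /(rank_le1_collinear rk1 u0)/[apply] -[b uB].
by rewrite (irr_common_eigenvector_eq0 irr uA uB) eqxx in u0.
Qed.

End Irreducible.

Section ClosedField.
Variable F : closedFieldType.
Implicit Types (A B M S T : 'M[F]_2).

Lemma exists_eigenvector n (A : 'M[F]_n.+1) :
  exists a, exists2 v : 'rV_n.+1, v *m A = a *: v & v != 0.
Proof.
have /closed_rootP[a] : size (char_poly A) != 1 by rewrite size_char_poly.
by rewrite -eigenvalue_root_char => /eigenvalueP; exists a.
Qed.

Lemma exists_scale_det1 n (T : 'M[F]_n.+1) : T \in unitmx -> exists c, \det (c *: T) = 1.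
Proof.
rewrite unitmxE unitfE => detT0.
have /closed_rootP[c] : size ('X^(n.+1) - (\det T)^-1%:P) != 1 by rewrite size_XnsubC.
rewrite rootE !hornerE subr_eq0 => /eqP cn.
by exists c; rewrite detZ cn mulVf.
Qed.

Lemma irr_commutant_scalar A B S : irreducible_rep (A, B) ->
  A *m S = S *m A -> B *m S = S *m B -> exists c, S = c%:M.
Proof.
move=> irr AS BS; have [c [v vS v0]] := exists_eigenvector S.
exists c; apply/eqP; rewrite -subr_eq0; apply/negPn/negP => N0.
have N_unit : S - c%:M \in unitmx.
  by apply: (irr_intertwiner_unit irr N0); rewrite mulmxBl mulmxBr ?AS ?BS scalar_mxC.
by move: v0; rewrite -(mulmxK N_unit v) mulmxBr vS mul_mx_scalar subrr mul0mx eqxx.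
Qed.

Lemma irr_commutator_unit A B : irreducible_rep (A, B) -> A *m B - B *m A \in unitmx.
Proof.
move=> irr; have [N0|N0] := eqVneq (A *m B - B *m A) 0; last first.
  apply: irr_stable_kernel_unit irr N0 _ => v vN.
  have stable (X Y : 'M[F]_2) :
      v *m (X *m Y - Y *m X) = 0 -> v *m X *m (X *m Y - Y *m X) = 0.
    move=> vXY; rewrite -mulmxA -[X *m (X *m Y - Y *m X)](addrK ((X *m Y - Y *m X) *m X)).
    by rewrite mx2_commutator_anticomm mulmxBr -scalemxAr vXY mulmxA vXY mul0mx scaler0 subrr.
  have vN' : v *m (B *m A - A *m B) = 0 by rewrite -opprB mulmxN vN oppr0.
  split; first exact: stable.
  by move/stable: vN'; rewrite -opprB mulmxN => /eqP; rewrite oppr_eq0 => /eqP.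
have [a Aa] : exists a, A = a%:M.
  by apply: irr_commutant_scalar irr _ _ => //; apply/eqP; rewrite eq_sym -subr_eq0 N0.
have [b [v vB v0]] := exists_eigenvector B.
by move: v0; rewrite (irr_common_eigenvector_eq0 (a := a) irr _ vB) ?eqxx // Aa mul_mx_scalar.
Qed.

Lemma irr_SL2_conj_exists A B (A' B' : 'M[F]_2) : irreducible_rep (A, B) ->
  \det A = \det A' -> \det B = 1 -> \det B' = 1 ->
  \tr A = \tr A' -> \tr B = \tr B' -> \tr (A *m B) = \tr (A' *m B') ->
  exists T, [/\ \det T = 1, A *m T = T *m A' & B *m T = T *m B'].
Proof.
move=> irr detA detB detB' trA trB trAB.
have [l [u uA u0]] := exists_eigenvector A.
have [u' u'A' u'0] := eigenvector_same_tr_det trA detA uA u0.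
have Pu := krylov2_unit irr u0 uA.
have [PA PB] := krylov2_normal_form detB uA.
have [P'A' P'B'] := krylov2_normal_form detB' u'A'.
rewrite -trA -trB -trAB in P'A' P'B'.
have AT0 := intertwine_same_form Pu PA P'A'.
have BT0 := intertwine_same_form Pu PB P'B'.
have T0_neq0 : invmx (krylov2 u B) *m krylov2 u' B' != 0.
  by rewrite mulmx_unit_eq0 ?unitmx_inv ?krylov2_neq0.
have [c detT] := exists_scale_det1 (irr_intertwiner_unit irr T0_neq0 AT0 BT0).
exists (c *: (invmx (krylov2 u B) *m krylov2 u' B')).
by rewrite -!scalemxAl -!scalemxAr AT0 BT0.
Qed.

Lemma irr_SL2_conj_unique A B (A' B' : 'M[F]_2) T T' : irreducible_rep (A, B) ->
  \det T = 1 -> \det T' = 1 ->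
  A *m T = T *m A' -> B *m T = T *m B' -> A *m T' = T' *m A' -> B *m T' = T' *m B' ->
  T' = T \/ T' = - T.
Proof.
move=> irr detT detT' AT BT AT' BT'; have Tu := det1_unitmx detT.
have commute X X' : X *m T = T *m X' -> X *m T' = T' *m X' ->
    X *m (T' *m invmx T) = (T' *m invmx T) *m X.
  move=> XT XT'; rewrite mulmxA XT' -!mulmxA; congr (_ *m _).
  by rewrite -[X' *m _](mulKmx Tu); congr (_ *m _); rewrite mulmxA -XT -mulmxA mulmxV ?mulmx1.
have [c cE] := irr_commutant_scalar irr (commute _ _ AT AT') (commute _ _ BT BT').
have T'E : T' = c *: T by rewrite -mul_scalar_mx -cE mulmxKV.
have /eqP : c ^+ 2 = 1 by rewrite -[RHS]detT' T'E detZ detT mulr1.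
by rewrite sqrf_eq1 => /orP[] /eqP c1; [left | right]; rewrite T'E c1 ?scale1r ?scaleN1r.
Qed.

Lemma irr_trace_dual A B M : irreducible_rep (A, B) -> \det B = 1 -> M != 0 ->
  [\/ \tr M != 0, \tr (A *m M) != 0, \tr (B *m M) != 0 | \tr (A *m B *m M) != 0].
Proof.
move=> irr detB M0.
have [t1|] := eqVneq (\tr M) 0; last by constructor 1.
have [t2|] := eqVneq (\tr (A *m M)) 0; last by constructor 2.
have [t3|] := eqVneq (\tr (B *m M)) 0; last by constructor 3.
have [t4|] := eqVneq (\tr (A *m B *m M)) 0; last by constructor 4.
have [l [u uA u0]] := exists_eigenvector A.
have Pu := krylov2_unit irr u0 uA; have [PA PB] := krylov2_normal_form detB uA.
set P := krylov2 u B in Pu PA PB.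
have conj_tr X X0 : P *m X = X0 *m P -> \tr (X0 *m (P *m M *m invmx P)) = \tr (X *m M).
  by move=> PX; rewrite !mulmxA -PX mxtrace_mulC !mulmxA mulVmx ?mul1mx.
have PMP0 : P *m M *m invmx P = 0.
  apply: lower_companion_trace_eq0.
  - by rewrite -unitfE -unitmxE; apply: irr_commutator_unit (irr_conj Pu PA PB irr).
  - by rewrite mxtrace_mulC mulKmx.
  - by rewrite (conj_tr _ _ PA).
  - by rewrite (conj_tr _ _ PB).
  - by rewrite (conj_tr _ _ (intertwine_mulmx PA PB)).
by rewrite -(mulmx_unit_eq0 _ Pu) -(mulmxKV Pu (P *m M)) PMP0 mul0mx eqxx in M0.
Qed.

End ClosedField.

Section Eval.
Variables (C : comUnitRingType) (rho : rep C).

Lemma eval_word_cat w1 w2 :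
  eval_word rho (w1 ++ w2) = eval_word rho w1 *m eval_word rho w2.
Proof. by rewrite /eval_word big_cat. Qed.

Lemma eval_word_seq1 x : eval_word rho [:: x] = eval_letter rho x.
Proof. by rewrite /eval_word big_seq1. Qed.

End Eval.

Section SL2Words.
Variables (C : comUnitRingType) (rho : rep C).
Hypothesis SL_rho : is_SL2_rep rho.

Lemma det_eval_letter x : \det (eval_letter rho x) = 1.
Proof.
case: SL_rho => detA detB.
by case: x => [[] []]; rewrite /eval_letter /= ?det_inv ?detA ?detB ?invr1.
Qed.

Lemma det_eval_word w : \det (eval_word rho w) = 1.
Proof.
apply: (big_ind (fun M : 'M[C]_2 => \det M = 1)) => [|M N dM dN|x _].
- exact: det1.
- by rewrite det_mulmx dM dN mulr1.
- exact: det_eval_letter.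
Qed.

Lemma eval_inv_word w : eval_word rho (inv_word w) = invmx (eval_word rho w).
Proof.
elim: w => [|x w IHw]; first by rewrite /inv_word /eval_word !big_nil invmx1.
rewrite /inv_word /= rev_cons -cats1 -/(inv_word w) eval_word_cat IHw eval_word_seq1.
rewrite -[x :: w]cat1s eval_word_cat eval_word_seq1.
rewrite invmxM ?det1_unitmx ?det_eval_letter ?det_eval_word //; congr (_ *m _).
by case: x => [[] []]; rewrite /eval_letter /= ?invmxK.
Qed.

Lemma eval_apply_endo phi w :
  eval_word rho (apply_endo phi w) = eval_word (eval_word rho phi.1, eval_word rho phi.2) w.
Proof.
rewrite /apply_endo /eval_word big_flatten big_map; apply: eq_bigr => -[[] []] _.
all: by rewrite /subst_letter /eval_letter /= -?eval_inv_word.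
Qed.

Lemma eval_word_conj T w : T \in unitmx ->
  invmx T *m eval_word rho w *m T =
  eval_word (invmx T *m rho.1 *m T, invmx T *m rho.2 *m T) w.
Proof.
move=> Tu; elim: w => [|x w IHw]; first by rewrite /eval_word !big_nil mulmx1 mulVmx.
have conj_letter : invmx T *m eval_letter rho x *m T =
    eval_letter (invmx T *m rho.1 *m T, invmx T *m rho.2 *m T) x.
  have [Au Bu] : rho.1 \in unitmx /\ rho.2 \in unitmx.
    by case: SL_rho; split; apply: det1_unitmx.
  by case: x => [[] []]; rewrite /eval_letter //= invmx_conj.
by rewrite -cat1s !eval_word_cat -IHw !eval_word_seq1 -conj_letter !mulmxA mulmxK.
Qed.

Lemma intertwinesP phi T : T \in unitmx ->
  intertwines phi rho T <->
  rho.1 *m T = T *m eval_word rho phi.1 /\ rho.2 *m T = T *m eval_word rho phi.2.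
Proof.
move=> Tu; split => [conj | [/(conj_mxP _ _ Tu) AT /(conj_mxP _ _ Tu) BT] w].
  have := conj gen_b; have := conj gen_a.
  by rewrite !eval_apply_endo !eval_word_seq1 /= => /(conj_mxP _ _ Tu) -> /(conj_mxP _ _ Tu).
by rewrite eval_word_conj // AT BT eval_apply_endo.
Qed.

End SL2Words.

Local Open Scope complex_scope.

Theorem lemma3p8 (R : realType) (phi : endo) (rho : rep R[i]) :
  hyperbolic_monodromy phi ->
  is_SL2_rep rho -> irreducible_rep rho -> char_fixed phi rho ->
  exists T : 'M[R[i]]_2,
    [/\ in_SL2 T, intertwines phi rho T,
        (forall T' : 'M[R[i]]_2, in_SL2 T' -> intertwines phi rho T' ->
           T' = T \/ T' = - T) &
        [\/ \tr T != 0, \tr (rho.1 *m T) != 0, \tr (rho.2 *m T) != 0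
          | \tr (rho.1 *m rho.2 *m T) != 0]].
Proof.
case: rho => A B _ SL_AB irr fixed; have [detA detB] := SL_AB.
set A' := eval_word (A, B) phi.1; set B' := eval_word (A, B) phi.2.
have trE w : \tr (eval_word (A, B) w) = \tr (eval_word (A', B') w).
  by rewrite fixed eval_apply_endo.
have trA : \tr A = \tr A' by have := trE gen_a; rewrite !eval_word_seq1.
have trB : \tr B = \tr B' by have := trE gen_b; rewrite !eval_word_seq1.
have trAB : \tr (A *m B) = \tr (A' *m B').
  by have := trE (gen_a ++ gen_b); rewrite !eval_word_cat !eval_word_seq1.
have [detA' detB'] : \det A' = 1 /\ \det B' = 1 by split; apply: det_eval_word.
have [T [detT AT BT]] :=
  irr_SL2_conj_exists irr (etrans detA (esym detA')) detB detB' trA trB trAB.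
have Tu := det1_unitmx detT.
exists T; split => //.
- exact/(intertwinesP SL_AB phi Tu).
- move=> T' detT' /(intertwinesP SL_AB phi (det1_unitmx detT'))[AT' BT'].
  exact: irr_SL2_conj_unique irr detT detT' AT BT AT' BT'.
- apply: irr_trace_dual irr detB _.
  by apply: contraTneq Tu => ->; rewrite unitmxE det0 unitr0.
Qed.
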